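(* Let $w\in\mathcal C_b(E)$ and $\lambda\in\mathbb R$ satisfy the Bellman equation \[ w(x)=\sup_{\tau\in\mathcal T_{x,b}}\ln\mathbb E_x\Big[\exp\Big(\int_0^\tau (f(X_s)-\lambda)\,ds+Mw(X_\tau)\Big)\Big],\qquad x\in E. \] Then $\lambda\ge r(f)$.
   Context: $X=(X_t)_{t\ge0}$ is a standard Feller–Markov process on a filtered probability space, with values in a locally compact separable metric space $(E,\rho)$ with Borel $\sigma$-field $\mathcal E$; $\mathbb P_x,\mathbb E_x$ denote the law/expectation of $X$ started at $x$. $\mathcal C_b(E)$ is the space of bounded continuous real functions on $E$ with sup norm $\|\cdot\|$. $\mathcal T_{x,b}$ is the family of stopping times that are $\mathbb P_x$-a.s. bounded. $U\subseteq E$ is a fixed compact set. $f:E\to(-\infty,0]$ is continuous and bounded; $c:E\times U\to(-\infty,0]$ is continuous and bounded. The operator $M$ is $Mh(x):=\sup_{\xi\in U}(c(x,\xi)+h(\xi))$ for $h\in\mathcal C_b(E)$, $x\in E$. For bounded continuous $g$, $r(g):=\lim_{t\to\infty}\frac1t\ln\sup_{x\in E}\mathbb E_x\big[e^{\int_0^t g(X_s)ds}\big]$ (the limit exists). *)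

From HB Require Import structures.
From mathcomp Require Import all_boot all_order all_algebra.
From mathcomp Require Import all_classical all_reals all_analysis.
Set Implicit Arguments. Unset Strict Implicit. Unset Printing Implicit Defensive.
Import Order.TTheory GRing.Theory Num.Theory.
Import numFieldNormedType.Exports.
Local Open Scope classical_set_scope.
Local Open Scope ring_scope.

Section Defs.
Context {R : realType}.

Definition borel_sets (E : topologicalType) : set_system E :=
  smallest (sigma_algebra setT) open.

Definition loc_compact_space (E : topologicalType) :=
  forall x : E, exists K : set E, compact K /\ nbhs x K.

Definition separable_space (E : topologicalType) :=
  exists D : set E, countable D /\ closure D = setT.

Definition bounded_fun (T : Type) (g : T -> R) := exists C : R, forall x, `|g x| <= C.

Definition Cb (E : topologicalType) (g : E -> R) := continuous g /\ bounded_fun g.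

Definition C0 (E : topologicalType) (g : E -> R) :=
  continuous g /\
  forall eps : R, 0 < eps -> exists K : set E, compact K /\
    forall x, ~ K x -> `|g x| < eps.

Context {d : measure_display} {Om : measurableType d} {E : pseudoPMetricType R}.

Definition filtration (F : R -> set_system Om) :=
  (forall t, sigma_algebra setT (F t)) /\
  (forall t, F t `<=` measurable) /\
  (forall s t, 0 <= s -> s <= t -> F s `<=` F t).

Definition right_continuous_filtration (F : R -> set_system Om) :=
  forall t, 0 <= t -> F t = \bigcap_(u in [set u | t < u]) F u.

Definition adapted (F : R -> set_system Om) (X : R -> Om -> E) :=
  forall t, 0 <= t -> forall B, borel_sets B -> F t (X t @^-1` B).

Definition cadlag_paths (X : R -> Om -> E) :=
  forall w : Om,
    (forall t, 0 <= t -> (X s w @[s --> t^'+] --> X t w)) /\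
    (forall t, 0 < t -> cvg (X s w @[s --> t^'-])).

Definition expect (P : E -> probability Om R) (x : E) (Y : Om -> R) : R :=
  fine (\int[P x]_w (Y w)%:E).

Definition semigroup (P : E -> probability Om R) (X : R -> Om -> E)
  (t : R) (h : E -> R) : E -> R := fun x => expect P x (fun w => h (X t w)).

Definition markov_property (P : E -> probability Om R) (F : R -> set_system Om)
  (X : R -> Om -> E) :=
  forall x h s t, Cb h -> 0 <= s -> 0 <= t -> forall A, F t A ->
    (\int[P x]_(w in A) (h (X (t + s) w))%:E =
     \int[P x]_(w in A) (semigroup P X s h (X t w))%:E)%E.

Definition feller (P : E -> probability Om R) (X : R -> Om -> E) :=
  forall h, C0 h ->
    (forall t, 0 <= t -> C0 (semigroup P X t h)) /\
    (forall x, semigroup P X t h x @[t --> 0^'+] --> h x).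

Definition feller_markov (P : E -> probability Om R) (F : R -> set_system Om)
  (X : R -> Om -> E) :=
  filtration F /\ right_continuous_filtration F /\ adapted F X /\
  cadlag_paths X /\
  (forall x, P x (X 0 @^-1` [set x]) = 1%E) /\
  markov_property P F X /\ feller P X.

Definition stopping_time (F : R -> set_system Om) (tau : Om -> \bar R) :=
  (forall w, (0 <= tau w)%E) /\
  (forall t, 0 <= t -> F t [set w | (tau w <= t%:E)%E]).

Definition Txb (P : E -> probability Om R) (F : R -> set_system Om) (x : E)
  : set (Om -> \bar R) :=
  [set tau | stopping_time F tau /\
     exists T : R, P x [set w | (T%:E < tau w)%E] = 0%E].

Definition path_int (X : R -> Om -> E) (g : E -> R) (t : R) (w : Om) : R :=
  fine (\int[lebesgue_measure]_(s in `[0, t]) (g (X s w))%:E).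

Definition rate_fun (P : E -> probability Om R) (X : R -> Om -> E) (g : E -> R)
  : R -> R := fun t =>
  ln (sup (range (fun x => expect P x (fun w => expR (path_int X g t w))))) / t.

Definition r (P : E -> probability Om R) (X : R -> Om -> E) (g : E -> R) : R :=
  lim (rate_fun P X g t @[t --> +oo]).

End Defs.

Definition Mop {R : realType} {E : Type} (U : set E) (c : E -> E -> R)
  (h : E -> R) (x : E) : R := sup [set c x xi + h xi | xi in U].

Definition bellman_rhs {R : realType} {d : measure_display} {Om : measurableType d}
  {E : pseudoPMetricType R}
  (P : E -> probability Om R) (F : R -> set_system Om) (X : R -> Om -> E)
  (U : set E) (c : E -> E -> R) (f w : E -> R) (lambda : R) (x : E) : \bar R :=
  ereal_sup [set (ln (expect P x (fun om =>
      expR (path_int X (fun y => f y - lambda) (fine (tau om)) om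
            + Mop U c w (X (fine (tau om)) om)))))%:E
    | tau in Txb P F x].

From HB Require Import structures.
From mathcomp Require Import all_boot all_order all_algebra.
From mathcomp Require Import all_classical all_reals all_analysis.
From mathcomp Require Import lra.
Set Implicit Arguments. Unset Strict Implicit. Unset Printing Implicit Defensive.
Import Order.TTheory GRing.Theory Num.Theory.
Import numFieldNormedType.Exports.
Local Open Scope classical_set_scope.
Local Open Scope ring_scope.

(* Stopping at the deterministic time t in the Bellman equation and using
   f <= 0, |c| <= Cc and |w| <= Cw gives, uniformly in x,
     ln E_x[exp (int_0^t f(X_s) ds)] <= lambda t + Cc + 2 Cw,
   so the rate t^-1 ln sup_x E_x[...] is at most lambda + O(1/t) and its limit
   r(f) is at most lambda.  The integrand s |-> f(X_s) is Lebesgue measurable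
   because the paths are right continuous. *)

Section right_continuous_measurable.
Variable R : realType.
Implicit Types (s : R) (n : nat).

Lemma measurable_comp_countable_range (D : set R) (phi g : R -> R) :
  measurable_fun D phi -> countable (range phi) -> measurable_fun D (g \o phi).
Proof.
move=> mphi cphi mD Y mY.
have -> : D `&` (g \o phi) @^-1` Y = D `&` phi @^-1` (g @^-1` Y `&` range phi).
  apply/seteqP; split => s [Ds gY]; split => //=.
    by split => //=; exists s.
  by case: gY.
apply: mphi => //; apply: countable_measurable; first exact: measurable_set1.
by apply: sub_countable cphi; apply: subset_card_le; exact: subIsetr.
Qed.

(* The first point strictly to the right of [s] of the grid of mesh [1/(n+1)]. *)
Definition upper_grid n s : R := (Num.floor (s * n.+1%:R) + 1)%:~R / n.+1%:R.

Lemma upper_grid_nd n : nondecreasing_fun (upper_grid n).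
Proof.
move=> x y xy; rewrite /upper_grid ler_wpM2r // ?invr_ge0 // ler_int lerD2r.
by apply: le_floor; rewrite ler_wpM2r.
Qed.

Lemma countable_range_upper_grid n : countable (range (upper_grid n)).
Proof.
apply: (@sub_countable _ _ _ [set: int]); last exact: countableP.
apply: (@card_le_trans _ _ _ ((fun k : int => (k + 1)%:~R / n.+1%:R : R) @` setT)).
  by apply: subset_card_le => _ [s _ <-]; exists (Num.floor (s * n.+1%:R)).
exact: card_image_le.
Qed.

Lemma upper_grid_gt n s : s < upper_grid n s.
Proof. by rewrite /upper_grid ltr_pdivlMr ?ltr0Sn //; exact: floorD1_gt. Qed.

Lemma upper_grid_le n s : upper_grid n s <= s + n.+1%:R^-1.
Proof.
rewrite /upper_grid ler_pdivrMr ?ltr0Sn // mulrDl mulVf ?pnatr_eq0 // intrD.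
by rewrite lerD2r; exact: floor_le.
Qed.

Lemma upper_grid_cvg s : upper_grid ^~ s @ \oo --> s^'+.
Proof.
move=> A /=; rewrite /at_right /within => /nbhs_ballP [e /= e0 He].
exists (Num.truncn e^-1) => // n /= Hn; apply: He; last exact: upper_grid_gt.
rewrite /ball /= distrC ger0_norm; last by rewrite subr_ge0 ltW // upper_grid_gt.
rewrite ltrBlDl; apply: (le_lt_trans (upper_grid_le n s)); rewrite ltrD2l.
rewrite -[e]invrK ltf_pV2 ?posrE ?invr_gt0 ?ltr0Sn //.
apply: (lt_le_trans (real_truncnS_gt _)); first by rewrite num_real.
by rewrite ler_nat ltnS.
Qed.

(* [g] is the pointwise limit of the step functions [g \o upper_grid n]. *)
Lemma right_continuous_measurable (t : R) (g : R -> R) :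
  (forall s, 0 <= s -> g x @[x --> s^'+] --> g s) -> measurable_fun `[0, t] g.
Proof.
move=> gr.
apply: (@measurable_realfun.measurable_fun_cvg _ _ _ _ (fun n => g \o upper_grid n)).
- move=> n; apply: measurable_comp_countable_range.
    exact: measurable_realfun.nondecreasing_measurable (@upper_grid_nd n).
  exact: countable_range_upper_grid.
- move=> s; rewrite /= in_itv /= => /andP[s0 _].
  exact: cvg_comp _ _ (upper_grid_cvg (s:=s)) (gr s s0).
Qed.

End right_continuous_measurable.

Section integral_itv0.
Variable R : realType.
Local Notation mu := (@lebesgue_measure R).
Variables (t C : R) (g : R -> R).
Hypotheses (t0 : 0 <= t) (mg : measurable_fun `[0, t] g).
Hypothesis gC : forall s, `|g s| <= C.

Lemma lebesgue_measure_itv0 : mu `[0, t] = t%:E.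
Proof.
rewrite lebesgue_measure_itv /= lte_fin; case: ifPn => [_|]; first by rewrite sube0.
by rewrite -leNgt => tle; congr (_%:E); apply/eqP; rewrite eq_le tle t0.
Qed.

Lemma integral_itv0_cst (k : R) :
  (\int[mu]_(s in `[0%R, t]) k%:E = (k * t)%:E)%E.
Proof. by rewrite integral_cst //; move: lebesgue_measure_itv0 => /= ->. Qed.

Lemma integrable_itv0_bounded (h : R -> R) (D : R) :
  measurable_fun `[0, t] h -> (forall s, `|h s| <= D) ->
  mu.-integrable `[0, t] (EFin \o h).
Proof.
move=> mh hD; apply: measurable_bounded_integrable => //.
  by move: lebesgue_measure_itv0 => /= ->; rewrite ltry.
exists D; split; first by rewrite num_real.
by move=> M DM x _ /=; rewrite (le_trans (hD x)) // ltW.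
Qed.

Let ig := integrable_itv0_bounded mg gC.
Let icst (k : R) : mu.-integrable `[0, t] (EFin \o cst k).
Proof. exact: (integrable_itv0_bounded _ (fun _ => lexx `|k|)). Qed.

Lemma fine_integral_itv0_subr (k : R) :
  fine (\int[mu]_(s in `[0, t]) (g s - k)%:E) =
  fine (\int[mu]_(s in `[0, t]) (g s)%:E) - k * t.
Proof.
have -> : (fun s => (g s - k)%:E) = (EFin \o g) \+ (EFin \o cst (- k)).
  by apply/funext => s /=; rewrite EFinD.
rewrite integralD_EFin // fineD; try exact: integrable_fin_num.
by rewrite integral_itv0_cst mulNr.
Qed.

Lemma fine_integral_itv0_npos_bounds : (forall s, g s <= 0) ->
  - C * t <= fine (\int[mu]_(s in `[0, t]) (g s)%:E) <= 0.
Proof.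
move=> g0.
have gfin : (\int[mu]_(s in `[0%R, t]) (g s)%:E)%E \is a fin_num.
  exact: integrable_fin_num.
apply/andP; split.
  rewrite -lee_fin fineK // -integral_itv0_cst.
  apply: (le_integral _ (icst _) ig) => // s _.
  by rewrite lee_fin; exact: lerNnormlW.
apply: fine_le0; apply: le_trans (le_integral _ ig (icst 0) _) _ => //.
  by move=> s _; rewrite lee_fin.
by rewrite integral_itv0_cst mul0r.
Qed.

End integral_itv0.

Section ge0_integral_nonmeasurable.
Local Open Scope ereal_scope.
Context (R : realType) (d : measure_display) (T : measurableType d).
Variable mu : {measure set T -> \bar R}.

Lemma ge0_le_integralT (f1 f2 : T -> \bar R) :
  (forall x, 0 <= f1 x) -> (forall x, f1 x <= f2 x) ->
  \int[mu]_x f1 x <= \int[mu]_x f2 x.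
Proof.
move=> f10 f12; have f20 x : 0 <= f2 x := le_trans (f10 x) (f12 x).
rewrite !ge0_integralTE //; apply: ereal_sup_le => _ [h hf <-].
by exists h => //= x; exact: le_trans (hf x) (f12 x).
Qed.

Lemma ge0_le_integralTZl (k : R) (f : T -> \bar R) : (0 < k)%R ->
  (forall x, 0 <= f x) -> k%:E * \int[mu]_x f x <= \int[mu]_x (k%:E * f x).
Proof.
move=> k0 f0; have kf0 x : 0 <= k%:E * f x by rewrite mule_ge0 // lee_fin ltW.
rewrite !ge0_integralTE // -ereal_sup_pZl //.
apply: ge_ereal_sup => _ [_ [h hf <-] <-].
apply: ereal_sup_ubound; exists (scale_nnsfun h (ltW k0)).
  by move=> x /=; rewrite EFinM lee_pmul2l ?lte_fin.
exact: sintegralrM.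
Qed.

End ge0_integral_nonmeasurable.

Lemma fin_num_between (R : realType) (x : \bar R) (a b : R) :
  (a%:E <= x <= b%:E)%E -> x \is a fin_num.
Proof.
case/andP => ax xb; rewrite fin_numElt (lt_le_trans (ltNyr a) ax).
exact: le_lt_trans xb (ltry b).
Qed.

Section probability_integral_bounded.
Context (R : realType) (d : measure_display) (T : measurableType d).
Variable mu : probability T R.
Implicit Types (h g : T -> R) (a b : R).

Lemma integral_probability_bounds h a b : 0 <= a -> (forall x, a <= h x <= b) ->
  (a%:E <= \int[mu]_x (h x)%:E <= b%:E)%E.
Proof.
move=> a0 hab; have cstE r : (\int[mu]_x r%:E = r%:E)%E.
  rewrite integral_cst //; set m := (X in (_ * X)%E).
  have -> : m = 1%E by exact: probability_setT.
  by rewrite mule1.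
apply/andP; split; [rewrite -[leLHS]cstE | rewrite -[leRHS]cstE];
  apply: ge0_le_integralT => x; rewrite lee_fin //.
- by case/andP: (hab x).
- by case/andP: (hab x) => + _; exact: le_trans.
- by case/andP: (hab x).
Qed.

Lemma fine_integral_probability_bounds h a b : 0 <= a ->
  (forall x, a <= h x <= b) -> a <= fine (\int[mu]_x (h x)%:E) <= b.
Proof.
move=> a0 /(integral_probability_bounds a0) hab.
by rewrite -!lee_fin fineK //; exact: fin_num_between hab.
Qed.

Lemma integral_probability_fin_num h b : (forall x, 0 <= h x <= b) ->
  (\int[mu]_x (h x)%:E)%E \is a fin_num.
Proof. by move/(integral_probability_bounds (lexx 0)); exact: fin_num_between. Qed.

Lemma le_fine_integral_probabilityZl (k bh bg : R) g h : 0 < k ->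
  (forall x, 0 <= h x <= bh) -> (forall x, k * h x <= g x <= bg) ->
  k * fine (\int[mu]_x (h x)%:E) <= fine (\int[mu]_x (g x)%:E).
Proof.
move=> k0 hb gb; have h0 x : 0 <= h x by case/andP: (hb x).
have g0 x : 0 <= g x.
  by case/andP: (gb x) => + _; apply: le_trans; rewrite mulr_ge0 ?(ltW k0).
have gb' x : 0 <= g x <= bg by rewrite g0; case/andP: (gb x).
rewrite -lee_fin EFinM !fineK ?(integral_probability_fin_num hb)
  ?(integral_probability_fin_num gb') //.
apply: le_trans (ge0_le_integralTZl mu k0 _) _ => [x|]; first by rewrite lee_fin.
apply: ge0_le_integralT => x; rewrite -EFinM lee_fin.
  by rewrite mulr_ge0 ?(ltW k0).
by case/andP: (gb x).
Qed.

End probability_integral_bounded.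

Section real_bounds.
Variable R : realType.

Lemma ln_sup_range_le (T : Type) (h : T -> R) (x0 : T) (B : R) :
  0 < h x0 -> (forall x, h x <= B) -> ln (sup (range h)) <= ln B.
Proof.
move=> hx0 hB; have ub : ubound (range h) B by move=> _ [x _ <-].
have ne : range h !=set0 by exists (h x0), x0.
have sup_gt0 : 0 < sup (range h).
  by apply: lt_le_trans hx0 (ub_le_sup _ _) => //; exists B.
rewrite ler_ln ?posrE //; last exact: lt_le_trans sup_gt0 (ge_sup ne ub).
exact: ge_sup ne ub.
Qed.

Lemma lim_le_add_div (u : R -> R) (a Q : R) :
  cvg (u t @[t --> +oo]) -> (forall t, 0 < t -> u t <= a + Q / t) ->
  lim (u t @[t --> +oo]) <= a.
Proof.
move=> ucvg uQ; apply/ler_addgt0Pr => e e0; apply: limr_le => //.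
exists (Num.max 1 (Q / e)); split; first by rewrite num_real.
move=> t; rewrite gt_max => /andP[t1 tQ]; have t0 : 0 < t by lra.
apply: le_trans (uQ t t0) _; rewrite lerD2l ler_pdivrMr //.
by move: tQ; rewrite ltr_pdivrMr // mulrC => /ltW.
Qed.

Lemma Mop_bounds (E : Type) (U : set E) (c : E -> E -> R) (h : E -> R) (Cc Ch : R) :
  U !=set0 -> (forall x xi, U xi -> `|c x xi| <= Cc) ->
  (forall x xi, U xi -> c x xi <= 0) -> (forall x, `|h x| <= Ch) ->
  forall x, - (Cc + Ch) <= Mop U c h x <= Ch.
Proof.
move=> [xi0 Uxi0] cC c0 hC x; rewrite /Mop.
have ne : [set c x xi + h xi | xi in U] !=set0 by exists (c x xi0 + h xi0), xi0.
have ub : ubound [set c x xi + h xi | xi in U] Ch.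
  move=> _ [xi Uxi <-]; rewrite -[Ch]add0r lerD ?c0 //.
  exact: le_trans (ler_norm _) (hC xi).
apply/andP; split; last exact: ge_sup.
apply: le_trans (ub_le_sup _ _); [|by exists Ch|by exists xi0].
by rewrite opprD; apply: lerD; apply: lerNnormlW; [exact: cC | exact: hC].
Qed.

End real_bounds.

Section bellman_rate_bound.
Context (R : realType) (E : pseudoPMetricType R).
Context (d : measure_display) (Om : measurableType d).
Variables (P : E -> probability Om R) (F : R -> set_system Om) (X : R -> Om -> E).
Hypotheses (hF : filtration F) (hX : cadlag_paths X).

Lemma stopping_time_cst (t : R) : 0 <= t -> stopping_time F (fun=> t%:E).
Proof.
move=> t0; split=> [_|s _]; first by rewrite lee_fin.
have [F0 FC _] := hF.1 s; have [ts|st] := leP t s.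
  rewrite (_ : [set om | (t%:E <= s%:E)%E] = setT).
    by move: (FC _ F0); rewrite setD0.
  by apply/seteqP; split => // om _ /=; rewrite lee_fin.
rewrite (_ : [set om | (t%:E <= s%:E)%E] = set0) //.
by apply/seteqP; split => // om /=; rewrite lee_fin leNgt st.
Qed.

Lemma Txb_cst (x : E) (t : R) : 0 <= t -> Txb P F x (fun=> t%:E).
Proof.
move=> t0; split; first exact: stopping_time_cst.
exists t; rewrite (_ : [set om | (t%:E < t%:E)%E] = set0) ?measure0 //.
by apply/seteqP; split => // om /=; rewrite ltxx.
Qed.

Lemma measurable_path_comp (g : E -> R) (t : R) (om : Om) :
  continuous g -> measurable_fun `[0, t] (fun s => g (X s om)).
Proof.
move=> gcont; apply: right_continuous_measurable => s s0.
exact: cvg_comp _ _ ((hX om).1 s s0) (gcont (X s om)).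
Qed.

Variables (U : set E) (c : E -> E -> R) (f w : E -> R) (lambda Cf Cc Cw : R).
Hypotheses (fcont : continuous f) (fC : forall x, `|f x| <= Cf).
Hypothesis f0 : forall x, f x <= 0.
Hypothesis wC : forall x, `|w x| <= Cw.
Hypothesis MwC : forall x, - (Cc + Cw) <= Mop U c w x <= Cw.
Hypothesis wsub : forall x, (bellman_rhs P F X U c f w lambda x <= (w x)%:E)%E.

Let path_int_bounds (t : R) (om : Om) : 0 <= t ->
  - Cf * t <= path_int X f t om <= 0.
Proof.
move=> t0; apply: fine_integral_itv0_npos_bounds => //.
exact: measurable_path_comp.
Qed.

Let path_int_subr (t : R) (om : Om) : 0 <= t ->
  path_int X (fun y => f y - lambda) t om = path_int X f t om - lambda * t.
Proof.
move=> t0; apply: fine_integral_itv0_subr => //.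
exact: measurable_path_comp.
Qed.

Lemma expect_exp_path_int_bounds (x : E) (t : R) : 0 < t ->
  0 < expect P x (fun om => expR (path_int X f t om)) <=
  expR (lambda * t + (Cc + Cw + Cw)).
Proof.
move=> tpos; have t0 := ltW tpos.
set H := fun om => expR (path_int X f t om).
set G := fun om =>
  expR (path_int X (fun y => f y - lambda) t om + Mop U c w (X t om)).
set k := expR (- lambda * t - (Cc + Cw)).
have Hb om : expR (- Cf * t) <= H om <= 1.
  by rewrite /H -expR0 !ler_expR; exact: path_int_bounds.
have GHb om : k * H om <= G om <= expR (- lambda * t + Cw).
  rewrite /k /H /G -expRD !ler_expR path_int_subr //.
  by case/andP: (path_int_bounds om t0); case/andP: (MwC (X t om)); lra.
have /andP[eH_gt eH_le] := fine_integral_probability_bounds (P x) (expR_ge0 _) Hb.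
have H01 om : 0 <= H om <= 1 by rewrite expR_ge0; case/andP: (Hb om).
have eHG := le_fine_integral_probabilityZl (P x) (expR_gt0 _) H01 GHb.
have lnG : ln (expect P x G) <= w x.
  rewrite -lee_fin; apply: le_trans (wsub x); apply: ereal_sup_ubound.
  by exists (fun=> t%:E); first exact: Txb_cst.
have eG_gt0 : 0 < expect P x G.
  apply: lt_le_trans eHG; rewrite mulr_gt0 ?expR_gt0 //.
  exact: lt_le_trans (expR_gt0 _) eH_gt.
have eG_le : expect P x G <= expR Cw.
  rewrite -[leLHS]lnK ?posrE // ler_expR.
  exact: le_trans lnG (le_trans (ler_norm _) (wC x)).
rewrite (lt_le_trans (expR_gt0 _) eH_gt) /=.
rewrite -(ler_pM2l (expR_gt0 (- lambda * t - (Cc + Cw)))) -expRD.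
rewrite (_ : - lambda * t - (Cc + Cw) + (lambda * t + (Cc + Cw + Cw)) = Cw).
  exact: le_trans eHG eG_le.
by rewrite mulNr; lra.
Qed.

Lemma rate_fun_le (x0 : E) (t : R) : 0 < t ->
  rate_fun P X f t <= lambda + (Cc + Cw + Cw) / t.
Proof.
move=> tpos; rewrite /rate_fun ler_pdivrMr // mulrDl divfK ?gt_eqF //.
rewrite -[leRHS]expRK; apply: (@ln_sup_range_le _ _ _ x0) => [|x].
  by case/andP: (expect_exp_path_int_bounds x0 tpos).
by case/andP: (expect_exp_path_int_bounds x tpos).
Qed.

End bellman_rate_bound.

Theorem lemma2p1
  (R : realType) (E : pseudoPMetricType R)
  (hE_haus : hausdorff_space E) (hE_lc : loc_compact_space E) (hE_sep : separable_space E)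
  (d : measure_display) (Om : measurableType d)
  (P : E -> probability Om R) (F : R -> set_system Om) (X : R -> Om -> E)
  (hX : feller_markov P F X)
  (U : set E) (hU : compact U) (hU0 : U !=set0)
  (f : E -> R) (hf : Cb f) (hf0 : forall x, f x <= 0)
  (c : E -> E -> R)
  (hc : {within [set p : E * E | U p.2], continuous (fun p : E * E => c p.1 p.2)})
  (hcb : exists C : R, forall x xi, U xi -> `|c x xi| <= C)
  (hc0 : forall x xi, U xi -> c x xi <= 0)
  (hr : cvg (rate_fun P X f t @[t --> +oo]))
  (w : E -> R) (hw : Cb w) (lambda : R)
  (hbell : forall x, (w x)%:E = bellman_rhs P F X U c f w lambda x) :
  r P X f <= lambda.
Proof.
have [hF [_ [_ [hcadlag _]]]] := hX.
have [fcont [Cf fC]] := hf; have [_ [Cw wC]] := hw; have [Cc cC] := hcb.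
have [x0 _] := hU0.
have MwC := Mop_bounds hU0 cC hc0 wC.
have wsub x : (bellman_rhs P F X U c f w lambda x <= (w x)%:E)%E by rewrite hbell.
apply: lim_le_add_div hr _ => t tpos.
exact (rate_fun_le hF hcadlag fcont fC hf0 wC MwC wsub x0 tpos).
Qed.
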